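(* With $\overline{C}(\alpha)$ as defined in the context, $\overline{C}(1)=\dfrac{\pi^2}{3}$.
   Context: For a strictly increasing sequence $(\lambda_k)_{k=-\infty}^{\infty}$ of real numbers, put $\delta_k:=\min\{\lambda_k-\lambda_{k-1},\lambda_{k+1}-\lambda_k\}$. For $0\le\alpha\le2$, let $\overline{C}(\alpha)$ be the minimum of all constants $C(\alpha)$ such that $$\sum_{m=1}^N\sum_{\substack{n=1\\ n\ne m}}^N\frac{\delta_m^{2-\alpha}\delta_n^{\alpha}t_mt_n}{(\lambda_m-\lambda_n)^2}\le C(\alpha)\sum_{n=1}^N t_n^2$$ holds for every positive integer $N$, every strictly increasing real sequence $(\lambda_k)_{k\in\mathbb Z}$ and all nonnegative reals $t_1,\dots,t_N$; set $\overline{C}(\alpha)=\infty$ if no such real constant exists. *)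

From Stdlib Require Import Reals ZArith Lra Lia.
Open Scope R_scope.

Fixpoint sum1 (N : nat) (f : nat -> R) : R :=
  match N with
  | O => 0
  | S N' => sum1 N' f + f N
  end.

Definition strictly_increasing (lam : Z -> R) : Prop :=
  forall j k : Z, (j < k)%Z -> lam j < lam k.

Definition delta (lam : Z -> R) (k : Z) : R :=
  Rmin (lam k - lam (k - 1)%Z) (lam (k + 1)%Z - lam k).

Definition lhs (alpha : R) (N : nat) (lam : Z -> R) (t : nat -> R) : R :=
  sum1 N (fun m => sum1 N (fun n =>
    if Nat.eqb m n then 0
    else Rpower (delta lam (Z.of_nat m)) (2 - alpha)
         * Rpower (delta lam (Z.of_nat n)) alpha * t m * t n
         / (lam (Z.of_nat m) - lam (Z.of_nat n)) ^ 2)).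

Definition admissible (alpha C : R) : Prop :=
  forall (N : nat), (1 <= N)%nat ->
  forall lam : Z -> R, strictly_increasing lam ->
  forall t : nat -> R, (forall n, (1 <= n <= N)%nat -> 0 <= t n) ->
  lhs alpha N lam t <= C * sum1 N (fun n => t n ^ 2).

From Stdlib Require Import Reals ZArith Lra Lia.
From Coquelicot Require Import Coquelicot.
Open Scope R_scope.

(* Upper bound: the form is a Schur test for the symmetric kernel
   K(m,n) = δ_m δ_n / (λ_m - λ_n)^2, so it suffices to bound every row sum by π²/3,
   i.e. each one-sided half of it by π²/6.  To the right of λ_m put
   x_k = λ_{m+k} - λ_m and d_k = δ_{m+k}; then x_0 = 0 and d_k, d_{k+1} ≤ x_{k+1} - x_k.
   Since 1/x² = ∫_0^∞ s e^{-xs} ds, it is enough to compare Laplace transforms: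
   Σ_{k≥1} d_k e^{-x_k s} ≤ d_0 Σ_{j≥1} e^{-j d_0 s}, i.e. the equally spaced
   configuration x_j = j d_0 is extremal.  This follows from an exchange step on the
   tail d e^{-xs} / (e^{ds} - 1) of an equally spaced configuration, which rests on the
   monotonicity of (e^t - 1)/t and (1 - e^{-t})/t.  Integrating in s gives
   d_0 Σ d_k / x_k² ≤ Σ_j 1/j² ≤ π²/6, where ζ(2) is squeezed through the identity
   Σ_{0<k<m} csc²(kπ/2m) = 2(m² - 1)/3 for m = 2^n and x - x³/6 ≤ sin x ≤ x.
   Lower bound: for λ = ℤ and t ≡ 1 all rows away from the ends have sum close to
   2 ζ(2) = π²/3. *)

Lemma sum1_S N f : sum1 (S N) f = sum1 N f + f (S N).
Proof. reflexivity. Qed.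

Lemma sum1_ext N f g :
  (forall k, (1 <= k <= N)%nat -> f k = g k) -> sum1 N f = sum1 N g.
Proof.
  induction N as [|N IH]; intros H; simpl; [reflexivity|].
  rewrite IH by (intros; apply H; lia). rewrite H by lia. reflexivity.
Qed.

Lemma sum1_le N f g :
  (forall k, (1 <= k <= N)%nat -> f k <= g k) -> sum1 N f <= sum1 N g.
Proof.
  induction N as [|N IH]; intros H; simpl; [lra|].
  assert (sum1 N f <= sum1 N g) by (apply IH; intros; apply H; lia).
  assert (f (S N) <= g (S N)) by (apply H; lia).
  lra.
Qed.

Lemma sum1_nonneg N f : (forall k, (1 <= k <= N)%nat -> 0 <= f k) -> 0 <= sum1 N f.
Proof.
  induction N as [|N IH]; intros H; simpl; [lra|].
  assert (0 <= sum1 N f) by (apply IH; intros; apply H; lia).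
  assert (0 <= f (S N)) by (apply H; lia).
  lra.
Qed.

Lemma sum1_plus N f g : sum1 N (fun k => f k + g k) = sum1 N f + sum1 N g.
Proof. induction N as [|N IH]; simpl; [lra| rewrite IH; lra]. Qed.

Lemma sum1_scal N c f : sum1 N (fun k => c * f k) = c * sum1 N f.
Proof. induction N as [|N IH]; simpl; [lra| rewrite IH; lra]. Qed.

Lemma sum1_const N c : sum1 N (fun _ => c) = INR N * c.
Proof. induction N as [|N IH]; simpl sum1; [simpl; lra| rewrite IH, S_INR; lra]. Qed.

Lemma sum1_add a b f : sum1 (a + b) f = sum1 a f + sum1 b (fun k => f (a + k)%nat).
Proof.
  induction b as [|b IH]; simpl.
  - rewrite Nat.add_0_r; lra.
  - rewrite Nat.add_succ_r. simpl. rewrite IH. lra.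
Qed.

Lemma sum1_S_l n g : sum1 (S n) g = g 1%nat + sum1 n (fun k => g (S k)).
Proof. induction n as [|n IH]; simpl; [lra|]. simpl in IH. rewrite IH. lra. Qed.

Lemma sum1_rev n f : sum1 n f = sum1 n (fun k => f (S n - k)%nat).
Proof.
  induction n as [|n IH]; [reflexivity|].
  rewrite sum1_S, IH, sum1_S_l.
  replace (S (S n) - 1)%nat with (S n) by lia.
  simpl. lra.
Qed.

Lemma sum1_swap N M (F : nat -> nat -> R) :
  sum1 N (fun m => sum1 M (F m)) = sum1 M (fun n => sum1 N (fun m => F m n)).
Proof.
  induction N as [|N IH]; simpl.
  - induction M as [|M IHM]; simpl; [reflexivity| rewrite <- IHM; lra].
  - rewrite IH, <- sum1_plus. reflexivity.
Qed.

Lemma sum1_le_upper a b f :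
  (a <= b)%nat -> (forall k, (1 <= k <= b)%nat -> 0 <= f k) -> sum1 a f <= sum1 b f.
Proof.
  intros Hab H. replace b with (a + (b - a))%nat by lia.
  rewrite sum1_add.
  assert (0 <= sum1 (b - a) (fun k => f (a + k)%nat)) by (apply sum1_nonneg; intros; apply H; lia).
  lra.
Qed.

Lemma sum1_around N m f : (1 <= m <= N)%nat ->
  sum1 N f = sum1 (m - 1) (fun k => f (m - k)%nat) + f m
             + sum1 (N - m) (fun k => f (m + k)%nat).
Proof.
  intros H. replace N with (m + (N - m))%nat at 1 by lia.
  rewrite sum1_add.
  replace m with (S (m - 1)) at 1 by lia.
  rewrite sum1_S, sum1_rev.
  replace (S (m - 1)) with m by lia. reflexivity.
Qed.

Lemma is_derive_sum1 n (f : nat -> R -> R) (f' : nat -> R) s :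
  (forall k, (1 <= k <= n)%nat -> is_derive (f k) s (f' k)) ->
  is_derive (fun y => sum1 n (fun k => f k y)) s (sum1 n f').
Proof.
  induction n as [|n IH]; intros H; simpl.
  - apply (is_derive_const 0 s).
  - apply (is_derive_plus (fun y => sum1 n (fun k => f k y)) (f (S n))).
    + apply IH. intros; apply H; lia.
    + apply H; lia.
Qed.

Lemma le_of_le_add_div_nat a b c :
  (forall n, (1 <= n)%nat -> a <= b + c / INR n) -> a <= b.
Proof.
  intros H. destruct (Rle_lt_dec a b) as [|Hba]; [assumption|exfalso].
  pose proof (Rabs_pos c).
  destruct (archimed_cor1 ((a - b) / (Rabs c + 1))) as (n & Hn & Hn0).
  { apply Rdiv_lt_0_compat; lra. }
  specialize (H n Hn0).
  assert (0 < INR n) by (apply lt_0_INR; lia).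
  set (q := (a - b) / (Rabs c + 1)) in *.
  assert ((Rabs c + 1) * q = a - b) by (unfold q; field; lra).
  assert (c / INR n <= Rabs c * / INR n).
  { apply Rmult_le_compat_r; [left; apply Rinv_0_lt_compat; lra| apply Rle_abs]. }
  assert (Rabs c * / INR n <= Rabs c * q) by (apply Rmult_le_compat_l; lra).
  assert (0 < q) by (unfold q; apply Rdiv_lt_0_compat; lra).
  nra.
Qed.

Lemma one_div_le_contravar a b : 0 < b -> b <= a -> 1 / a <= 1 / b.
Proof. intros. unfold Rdiv. rewrite !Rmult_1_l. apply Rinv_le_contravar; lra. Qed.

Lemma pow2_gt_id n : (n < 2 ^ n)%nat.
Proof. induction n; simpl; lia. Qed.

Lemma sin_ge_cubic y : 0 <= y <= 2 -> y - y ^ 3 / 6 <= sin y.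
Proof.
  intros Hy. pose proof PI2_3_2.
  destruct (SIN y) as [Hlb _]; [lra| lra|].
  unfold sin_lb, sin_approx, sin_term in Hlb. simpl sum_f_R0 in Hlb. simpl in Hlb.
  assert (0 <= y ^ 5) by (apply pow_le; lra).
  assert (y ^ 2 <= 4) by nra.
  assert (y ^ 7 = y ^ 5 * y ^ 2) by ring.
  eapply Rle_trans; [|exact Hlb]. nra.
Qed.

Lemma inv_sin_sq_le y : 0 < y <= 2 -> 1 / sin y ^ 2 <= 1 / y ^ 2 + 3.
Proof.
  intros Hy.
  set (p := y * (1 - y ^ 2 / 6)).
  assert (Hp : p <= sin y) by (unfold p; pose proof (sin_ge_cubic y); lra).
  assert (Hp0 : 0 < p) by (unfold p; apply Rmult_lt_0_compat; nra).
  assert (Hsin : 1 / sin y ^ 2 <= 1 / p ^ 2).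
  { apply one_div_le_contravar; [apply pow_lt; lra| apply pow_incr; lra]. }
  set (u := y ^ 2).
  assert (Hu : 0 < u <= 4) by (unfold u; nra).
  assert (Hquad : 0 < 8 / 3 - 35 * u / 36 + u ^ 2 / 12) by nra.
  assert (Hpoly : p ^ 2 * (1 + 3 * u) - u = u * (u * (8 / 3 - 35 * u / 36 + u ^ 2 / 12)))
    by (unfold p, u; field).
  assert (E : 1 / u + 3 - 1 / p ^ 2 = (p ^ 2 * (1 + 3 * u) - u) / (u * p ^ 2))
    by (field; lra).
  assert (0 <= (p ^ 2 * (1 + 3 * u) - u) / (u * p ^ 2)).
  { rewrite Hpoly. apply Rmult_le_pos.
    - apply Rmult_le_pos; [lra| apply Rmult_le_pos; lra].
    - left. apply Rinv_0_lt_compat. apply Rmult_lt_0_compat; [lra| apply pow_lt; lra]. }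
  fold u. lra.
Qed.

Lemma inv_sq_le_inv_sin_sq y : 0 < y < PI -> 1 / y ^ 2 <= 1 / sin y ^ 2.
Proof.
  intros Hy. pose proof (sin_gt_0 y (proj1 Hy) (proj2 Hy)). pose proof (sin_lt_x y (proj1 Hy)).
  apply one_div_le_contravar; [apply pow_lt; lra| apply pow_incr; lra].
Qed.

Lemma inv_sin_sq_add_inv_cos_sq y : 0 < y < PI / 2 ->
  1 / sin y ^ 2 + 1 / cos y ^ 2 = 4 / sin (2 * y) ^ 2.
Proof.
  intros Hy. rewrite sin_2a.
  assert (0 < sin y) by (apply sin_gt_0; lra).
  assert (0 < cos y) by (apply cos_gt_0; lra).
  pose proof (sin2_cos2 y) as E. unfold Rsqr in E.
  transitivity ((sin y ^ 2 + cos y ^ 2) / (sin y ^ 2 * cos y ^ 2)).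
  - field. lra.
  - replace (sin y ^ 2 + cos y ^ 2) with 1 by (simpl; lra). field. lra.
Qed.

Definition csc_sq_sum (m : nat) : R :=
  sum1 (m - 1) (fun k => 1 / sin (INR k * PI / (2 * INR m)) ^ 2).

Definition inv_sq_sum (n : nat) : R := sum1 n (fun k => 1 / INR k ^ 2).

(* Pairing the angles [k π / 4m] and [π/2 - k π / 4m] and applying
   [inv_sin_sq_add_inv_cos_sq] folds the sum for [2m] onto the one for [m]. *)
Lemma csc_sq_sum_double m : (1 <= m)%nat -> csc_sq_sum (2 * m) = 4 * csc_sq_sum m + 2.
Proof.
  intros Hm. unfold csc_sq_sum.
  assert (Hmr : 1 <= INR m) by (apply (le_INR 1); lia).
  pose proof PI_RGT_0.
  set (g := fun k => 1 / sin (INR k * PI / (2 * INR (2 * m))) ^ 2).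
  replace (2 * m - 1)%nat with (S (m - 1) + (m - 1))%nat by lia.
  rewrite sum1_add, sum1_S, (sum1_rev (m - 1) (fun k => g (S (m - 1) + k)%nat)).
  replace (S (m - 1)) with m by lia.
  assert (Hmid : g m = 2).
  { unfold g. rewrite mult_INR. simpl (INR 2).
    replace (INR m * PI / (2 * ((1 + 1) * INR m))) with (PI / 4) by (field; lra).
    rewrite sin_PI4. pose proof (sqrt_sqrt 2). pose proof (sqrt_lt_R0 2).
    field_simplify; [|lra..]. replace (sqrt 2 ^ 2) with 2 by (simpl; nra). lra. }
  assert (Hpair : sum1 (m - 1) g + sum1 (m - 1) (fun k => g (m + (m - k))%nat)
                  = 4 * sum1 (m - 1) (fun k => 1 / sin (INR k * PI / (2 * INR m)) ^ 2)).
  { rewrite <- sum1_plus, <- sum1_scal. apply sum1_ext. intros k Hk.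
    assert (1 <= INR k) by (apply (le_INR 1); lia).
    assert (INR k + 1 <= INR m) by (rewrite <- S_INR; apply le_INR; lia).
    unfold g. rewrite !mult_INR, plus_INR, minus_INR by lia. simpl (INR 2).
    set (y := INR k * PI / (2 * ((1 + 1) * INR m))).
    assert (Hy : 0 < y < PI / 2).
    { unfold y. split; [apply Rdiv_lt_0_compat; nra|].
      apply Rmult_lt_reg_r with (2 * ((1 + 1) * INR m)); [lra|].
      field_simplify; nra. }
    replace ((INR m + (INR m - INR k)) * PI / (2 * ((1 + 1) * INR m))) with (PI / 2 - y)
      by (unfold y; field; lra).
    replace (INR k * PI / (2 * INR m)) with (2 * y) by (unfold y; field; lra).
    rewrite sin_shift, inv_sin_sq_add_inv_cos_sq by exact Hy. field.
    apply Rgt_not_eq, sin_gt_0; lra. }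
  simpl in Hpair |- *. lra.
Qed.

Lemma csc_sq_sum_pow2 n : csc_sq_sum (2 ^ n) = 2 * ((2 ^ n) ^ 2 - 1) / 3.
Proof.
  induction n as [|n IH].
  - unfold csc_sq_sum. simpl. field.
  - rewrite Nat.pow_succ_r', csc_sq_sum_double, IH.
    + simpl. field.
    + pose proof (Nat.pow_nonzero 2 n). lia.
Qed.

Lemma csc_sq_sum_bounds m : (1 <= m)%nat ->
  4 * INR m ^ 2 / PI ^ 2 * inv_sq_sum (m - 1) <= csc_sq_sum m <=
  4 * INR m ^ 2 / PI ^ 2 * inv_sq_sum (m - 1) + 3 * INR (m - 1).
Proof.
  intros Hm. assert (Hmr : 1 <= INR m) by (apply (le_INR 1); lia).
  pose proof PI_RGT_0. pose proof PI_4.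
  unfold csc_sq_sum, inv_sq_sum. rewrite <- sum1_scal.
  assert (Hangle : forall k, (1 <= k <= m - 1)%nat ->
     0 < INR k * PI / (2 * INR m) < PI / 2 /\
     4 * INR m ^ 2 / PI ^ 2 * (1 / INR k ^ 2) = 1 / (INR k * PI / (2 * INR m)) ^ 2).
  { intros k Hk. assert (1 <= INR k) by (apply (le_INR 1); lia).
    assert (INR k + 1 <= INR m) by (rewrite <- S_INR; apply le_INR; lia).
    split; [split|].
    - apply Rdiv_lt_0_compat; nra.
    - apply Rmult_lt_reg_r with (2 * INR m); [lra|]. field_simplify; nra.
    - field. lra. }
  split.
  - apply sum1_le. intros k Hk. destruct (Hangle k Hk) as [Hy ->].
    apply inv_sq_le_inv_sin_sq. lra.
  - replace (3 * INR (m - 1)) with (sum1 (m - 1) (fun _ => 3)) by (rewrite sum1_const; ring).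
    rewrite <- sum1_plus. apply sum1_le. intros k Hk. destruct (Hangle k Hk) as [Hy ->].
    apply inv_sin_sq_le. lra.
Qed.

Lemma inv_sq_sum_le_upper a b : (a <= b)%nat -> inv_sq_sum a <= inv_sq_sum b.
Proof.
  intros Hab. apply sum1_le_upper; [exact Hab|]. intros k Hk.
  assert (1 <= INR k) by (apply (le_INR 1); lia).
  apply Rlt_le, Rdiv_lt_0_compat; [lra| apply pow_lt; lra].
Qed.

Lemma inv_sq_sum_le n : inv_sq_sum n <= PI ^ 2 / 6.
Proof.
  pose proof PI_RGT_0.
  assert (Hn : (n < 2 ^ n)%nat) by apply pow2_gt_id.
  pose proof (inv_sq_sum_le_upper n (2 ^ n - 1) ltac:(lia)).
  destruct (csc_sq_sum_bounds (2 ^ n) ltac:(lia)) as [Hlow _].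
  rewrite csc_sq_sum_pow2, pow_INR in Hlow. simpl (INR 2) in Hlow.
  assert (HM : 1 <= (1 + 1) ^ n) by (apply pow_R1_Rle; lra).
  set (M := (1 + 1) ^ n) in *. replace (2 ^ n) with M in Hlow by (unfold M; f_equal; lra).
  set (z := inv_sq_sum (2 ^ n - 1)) in *.
  assert (z <= PI ^ 2 * (M ^ 2 - 1) / (6 * M ^ 2)).
  { apply Rmult_le_reg_l with (4 * M ^ 2 / PI ^ 2).
    - apply Rdiv_lt_0_compat; [nra| apply pow_lt; lra].
    - eapply Rle_trans; [exact Hlow|]. right. field. lra. }
  assert (PI ^ 2 * (M ^ 2 - 1) / (6 * M ^ 2) <= PI ^ 2 / 6).
  { apply Rmult_le_reg_r with (6 * M ^ 2); [nra|]. field_simplify; nra. }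
  lra.
Qed.

Lemma inv_sq_sum_pow2_ge n : PI ^ 2 / 6 - 15 / 2 ^ n <= inv_sq_sum (2 ^ n - 1).
Proof.
  pose proof PI_RGT_0. pose proof PI_4.
  assert (Hn : (n < 2 ^ n)%nat) by apply pow2_gt_id.
  destruct (csc_sq_sum_bounds (2 ^ n) ltac:(lia)) as [_ Hup].
  rewrite csc_sq_sum_pow2, minus_INR, pow_INR in Hup by lia. simpl (INR 2) in Hup.
  simpl (INR 1) in Hup.
  assert (HM : 1 <= (1 + 1) ^ n) by (apply pow_R1_Rle; lra).
  set (M := (1 + 1) ^ n) in *. replace (2 ^ n) with M by (unfold M; f_equal; lra).
  replace (2 ^ n) with M in Hup by (unfold M; f_equal; lra).
  set (z := inv_sq_sum (2 ^ n - 1)) in *.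
  assert (HA : 0 < 4 * M ^ 2 / PI ^ 2) by (apply Rdiv_lt_0_compat; [nra| apply pow_lt; lra]).
  assert (Hz : PI ^ 2 / 6 - PI ^ 2 / (6 * M ^ 2) - 3 * PI ^ 2 * (M - 1) / (4 * M ^ 2) <= z).
  { apply Rmult_le_reg_l with (4 * M ^ 2 / PI ^ 2); [exact HA|].
    replace (4 * M ^ 2 / PI ^ 2 * (PI ^ 2 / 6 - PI ^ 2 / (6 * M ^ 2)
                                   - 3 * PI ^ 2 * (M - 1) / (4 * M ^ 2)))
      with (2 * (M ^ 2 - 1) / 3 - 3 * (M - 1)) by (field; lra).
    lra. }
  assert (PI ^ 2 / (6 * M ^ 2) <= 16 / (6 * M)).
  { apply Rmult_le_reg_r with (6 * M ^ 2); [nra|]. field_simplify; nra. }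
  assert (3 * PI ^ 2 * (M - 1) / (4 * M ^ 2) <= 12 / M).
  { assert (PI ^ 2 <= 16) by nra.
    apply Rmult_le_reg_r with (4 * M ^ 2); [nra|]. field_simplify; nra. }
  assert (16 / (6 * M) + 12 / M <= 15 / M).
  { apply Rmult_le_reg_r with (6 * M); [nra|]. field_simplify; lra. }
  lra.
Qed.

Lemma exp_le_chord l u : 0 <= l <= 1 -> exp (l * u) <= 1 - l + l * exp u.
Proof.
  intros Hl. set (c := l * u).
  pose proof (exp_ineq1_le (u - c)). pose proof (exp_ineq1_le (- c)).
  assert (E1 : exp u = exp c * exp (u - c)) by (rewrite <- exp_plus; f_equal; ring).
  assert (E0 : exp c * exp (- c) = 1) by (rewrite <- exp_plus, <- exp_0; f_equal; ring).
  assert (0 < exp c) by apply exp_pos.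
  assert (l * exp (u - c) + (1 - l) * exp (- c) >= l * (1 + (u - c)) + (1 - l) * (1 - c)) by nra.
  assert (l * (1 + (u - c)) + (1 - l) * (1 - c) = 1) by (unfold c; ring).
  rewrite E1. nra.
Qed.

Lemma expm1_ratio_le a b : 0 < a <= b -> b * (exp a - 1) <= a * (exp b - 1).
Proof.
  intros Hab.
  assert (Hl : 0 <= a / b <= 1).
  { split; [apply Rlt_le, Rdiv_lt_0_compat; lra|].
    apply Rmult_le_reg_r with b; [lra|]. field_simplify; lra. }
  pose proof (exp_le_chord (a / b) b Hl) as H.
  replace (a / b * b) with a in H by (field; lra).
  apply (Rmult_le_compat_l b) in H; [|lra].
  replace (b * (1 - a / b + a / b * exp b)) with (b - a + a * exp b) in H by (field; lra).
  lra.
Qed.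

Lemma one_sub_exp_neg_ratio_le a b : 0 < a <= b -> a * (1 - exp (- b)) <= b * (1 - exp (- a)).
Proof.
  intros Hab.
  assert (Hl : 0 <= a / b <= 1).
  { split; [apply Rlt_le, Rdiv_lt_0_compat; lra|].
    apply Rmult_le_reg_r with b; [lra|]. field_simplify; lra. }
  pose proof (exp_le_chord (a / b) (- b) Hl) as H.
  replace (a / b * - b) with (- a) in H by (field; lra).
  apply (Rmult_le_compat_l b) in H; [|lra].
  replace (b * (1 - a / b + a / b * exp (- b))) with (b - a + a * exp (- b)) in H by (field; lra).
  lra.
Qed.

Lemma exp_le_exp_of_le x y : x <= y -> exp x <= exp y.
Proof. intros [H|H]; [left; apply exp_increasing; exact H| subst; lra]. Qed.

(* [lattice_tail_step] scaled by the Laplace variable: [a], [b] are the two weights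
   and [g] the gap. *)
Lemma exchange_ineq a b g : 0 < a -> 0 < b -> a <= g -> b <= g ->
  b * exp (b - g) * (exp a - 1) <= a * (exp b - 1).
Proof.
  intros Ha Hb Hag Hbg.
  pose proof (exp_ineq1_le a). pose proof (exp_pos b).
  destruct (Rle_dec b a) as [Hba|Hab].
  - assert (exp (b - g) <= exp b * exp (- a)).
    { rewrite <- exp_plus. apply exp_le_exp_of_le. lra. }
    assert (Ea : exp (- a) * exp a = 1) by (rewrite <- exp_plus, <- exp_0; f_equal; ring).
    assert (exp b * exp (- b) = 1) by (rewrite <- exp_plus, <- exp_0; f_equal; ring).
    pose proof (one_sub_exp_neg_ratio_le b a (conj Hb Hba)).
    assert (b * exp (b - g) * (exp a - 1) <= b * (exp b * exp (- a)) * (exp a - 1)).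
    { apply Rmult_le_compat_r; [lra|]. apply Rmult_le_compat_l; lra. }
    assert (b * (exp b * exp (- a)) * (exp a - 1) = exp b * (b * (1 - exp (- a)))).
    { transitivity (b * exp b * (exp (- a) * exp a - exp (- a))); [ring|]. rewrite Ea. ring. }
    assert (exp b * (b * (1 - exp (- a))) <= exp b * (a * (1 - exp (- b))))
      by (apply Rmult_le_compat_l; lra).
    nra.
  - assert (exp (b - g) <= 1) by (rewrite <- exp_0; apply exp_le_exp_of_le; lra).
    pose proof (expm1_ratio_le a b (conj Ha (Rlt_le _ _ (Rnot_le_lt _ _ Hab)))).
    assert (b * exp (b - g) * (exp a - 1) <= b * 1 * (exp a - 1)).
    { apply Rmult_le_compat_r; [lra|]. apply Rmult_le_compat_l; lra. }
    lra.
Qed.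

Lemma exp_gt_1 u : 0 < u -> 1 < exp u.
Proof. intros. pose proof (exp_ineq1_le u). lra. Qed.

(* [lattice_tail s x d = d Σ_{j≥1} e^{-(x + j d) s}], the Laplace transform at [s]
   of the equally spaced points [x + d, x + 2d, ...], each of weight [d]. *)
Definition lattice_tail (s x d : R) : R := d * exp (- (x * s)) / (exp (d * s) - 1).

Lemma lattice_tail_nonneg s x d : 0 < s -> 0 < d -> 0 <= lattice_tail s x d.
Proof.
  intros. unfold lattice_tail. apply Rlt_le, Rdiv_lt_0_compat.
  - apply Rmult_lt_0_compat; [lra| apply exp_pos].
  - pose proof (exp_gt_1 (d * s) ltac:(nra)). lra.
Qed.

Lemma lattice_tail_step s x g d d' : 0 < s -> 0 < d -> 0 < d' -> d <= g -> d' <= g ->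
  d' * exp (- ((x + g) * s)) + lattice_tail s (x + g) d' <= lattice_tail s x d.
Proof.
  intros Hs Hd Hd' Hg Hg'. unfold lattice_tail.
  set (e := exp (- (x * s))). set (E := exp (- (g * s))).
  set (P := exp (d' * s)). set (Pd := exp (d * s)).
  assert (Ee : exp (- ((x + g) * s)) = e * E)
    by (unfold e, E; rewrite <- exp_plus; f_equal; ring).
  rewrite Ee.
  assert (He : 0 < e) by apply exp_pos.
  assert (HE : 0 < E) by apply exp_pos.
  assert (HP : 1 < P) by (apply exp_gt_1; nra).
  assert (HPd : 1 < Pd) by (apply exp_gt_1; nra).
  assert (Key : d' * E * P * (Pd - 1) <= d * (P - 1)).
  { pose proof (exchange_ineq (d * s) (d' * s) (g * s)) as X.
    replace (exp (d' * s - g * s)) with (P * E) in X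
      by (unfold P, E; rewrite <- exp_plus; f_equal; ring).
    apply Rmult_le_reg_l with s; [exact Hs|].
    fold Pd P in X. specialize (X ltac:(nra) ltac:(nra) ltac:(nra) ltac:(nra)). nra. }
  assert (E1 : d * e / (Pd - 1) - (d' * (e * E) + d' * (e * E) / (P - 1))
             = e * (d * (P - 1) - d' * E * P * (Pd - 1)) / ((P - 1) * (Pd - 1)))
    by (field; lra).
  assert (0 <= e * (d * (P - 1) - d' * E * P * (Pd - 1)) / ((P - 1) * (Pd - 1))).
  { apply Rmult_le_pos; [apply Rmult_le_pos; lra|]. left. apply Rinv_0_lt_compat. nra. }
  lra.
Qed.

Lemma inv_exp_sub_1_expand u K : 0 < u ->
  1 / (exp u - 1)
  = sum1 K (fun j => exp (- (INR j * u))) + exp (- (INR K * u)) / (exp u - 1).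
Proof.
  intros Hu. pose proof (exp_gt_1 u Hu).
  induction K as [|K IH].
  - simpl. rewrite Rmult_0_l, Ropp_0, exp_0. lra.
  - rewrite IH, sum1_S, S_INR.
    assert (E : exp (- (INR K * u)) = exp (- ((INR K + 1) * u)) * exp u)
      by (rewrite <- exp_plus; f_equal; ring).
    rewrite E. field. lra.
Qed.

(* [int_texp c S = ∫_0^S s e^{-cs} ds] and [int_exp c S = ∫_0^S e^{-cs} ds]; for
   [c > 0] they increase to [1/c^2] and [1/c] as [S → ∞]. *)
Definition int_texp (c S : R) : R := 1 / c ^ 2 - (S / c + 1 / c ^ 2) * exp (- (c * S)).

Definition int_exp (c S : R) : R := (1 - exp (- (c * S))) / c.

Lemma is_derive_int_texp c s : c <> 0 -> is_derive (int_texp c) s (s * exp (- (c * s))).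
Proof. intros Hc. unfold int_texp. auto_derive; [auto| field; auto]. Qed.

Lemma is_derive_int_exp c s : c <> 0 -> is_derive (int_exp c) s (exp (- (c * s))).
Proof. intros Hc. unfold int_exp. auto_derive; [auto| field; auto]. Qed.

Lemma int_texp_0 c : int_texp c 0 = 0.
Proof. unfold int_texp. rewrite Rmult_0_r, Ropp_0, exp_0. unfold Rdiv. ring. Qed.

Lemma int_exp_0 c : int_exp c 0 = 0.
Proof. unfold int_exp. rewrite Rmult_0_r, Ropp_0, exp_0. unfold Rdiv. ring. Qed.

Lemma int_texp_le c S : 0 < c -> 0 <= S -> int_texp c S <= 1 / c ^ 2.
Proof.
  intros Hc HS. unfold int_texp. pose proof (exp_pos (- (c * S))).
  assert (0 <= S / c + 1 / c ^ 2).
  { apply Rplus_le_le_0_compat; [apply Rmult_le_pos; [lra| left; apply Rinv_0_lt_compat; lra]|].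
    apply Rlt_le, Rdiv_lt_0_compat; [lra| apply pow_lt; lra]. }
  nra.
Qed.

Lemma int_exp_le c S : 0 < c -> int_exp c S <= 1 / c.
Proof.
  intros Hc. unfold int_exp, Rdiv. pose proof (exp_pos (- (c * S))).
  apply Rmult_le_compat_r; [left; apply Rinv_0_lt_compat|]; lra.
Qed.

Lemma inv_sq_sub_int_texp_le c S : 0 < c -> 1 <= S ->
  1 / c ^ 2 - int_texp c S <= (4 / c ^ 3 + 4 / c ^ 4) / S.
Proof.
  intros Hc HS. unfold int_texp.
  assert (Hy : 0 < c * S) by nra.
  pose proof (exp_ineq1_le (c * S / 2)).
  assert (Hsq : (c * S) ^ 2 / 4 <= exp (c * S)).
  { replace (exp (c * S)) with (exp (c * S / 2) * exp (c * S / 2))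
      by (rewrite <- exp_plus; f_equal; field).
    nra. }
  assert (Hexp : exp (- (c * S)) <= 4 / (c * S) ^ 2).
  { rewrite exp_Ropp. replace (4 / (c * S) ^ 2) with (/ ((c * S) ^ 2 / 4)) by (field; lra).
    apply Rinv_le_contravar; [nra| exact Hsq]. }
  assert (0 <= S / c + 1 / c ^ 2).
  { apply Rplus_le_le_0_compat; apply Rlt_le, Rdiv_lt_0_compat; try lra. apply pow_lt; lra. }
  assert ((S / c + 1 / c ^ 2) * exp (- (c * S)) <= (S / c + 1 / c ^ 2) * (4 / (c * S) ^ 2))
    by (apply Rmult_le_compat_l; lra).
  assert (0 < 4 / c ^ 4 / S)
    by (apply Rdiv_lt_0_compat; [apply Rdiv_lt_0_compat; [lra| apply pow_lt; lra]| lra]).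
  assert (4 / c ^ 4 / S / S <= 4 / c ^ 4 / S).
  { apply Rmult_le_reg_r with S; [lra|].
    replace (4 / c ^ 4 / S / S * S) with (4 / c ^ 4 / S) by (field; lra). nra. }
  replace ((S / c + 1 / c ^ 2) * (4 / (c * S) ^ 2)) with (4 / c ^ 3 / S + 4 / c ^ 4 / S / S)
    in * by (field; lra).
  replace ((4 / c ^ 3 + 4 / c ^ 4) / S) with (4 / c ^ 3 / S + 4 / c ^ 4 / S) by (field; lra).
  lra.
Qed.

Lemma le_of_derive_nonpos F F' S : 0 <= S ->
  (forall s, is_derive F s (F' s)) -> (forall s, 0 <= s -> F' s <= 0) -> F S <= F 0.
Proof.
  intros [HS|<-] HD Hneg; [|lra].
  destruct (MVT_cor3 F F' 0 S HS) as (c & Hc0 & HcS & ->).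
  { intros y _ _. apply is_derive_Reals, HD. }
  pose proof (Hneg c Hc0). nra.
Qed.

Section Gaps.

Variables x d : nat -> R.
Hypothesis x_0 : x 0%nat = 0.
Hypothesis d_pos : forall k, 0 < d k.
Hypothesis d_le_gap : forall k, d k <= x (S k) - x k.
Hypothesis d_succ_le_gap : forall k, d (S k) <= x (S k) - x k.

Lemma x_pos k : (1 <= k)%nat -> 0 < x k.
Proof.
  intros Hk. destruct k as [|k]; [lia|]. clear Hk.
  induction k as [|k IH].
  - pose proof (d_le_gap 0). pose proof (d_pos 0). lra.
  - pose proof (d_le_gap (S k)). pose proof (d_pos (S k)). lra.
Qed.

Lemma laplace_add_lattice_tail_le s n : 0 < s ->
  sum1 n (fun k => d k * exp (- (x k * s))) + lattice_tail s (x n) (d n)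
  <= lattice_tail s 0 (d 0%nat).
Proof.
  intros Hs. induction n as [|n IH].
  - simpl. rewrite x_0. lra.
  - rewrite sum1_S.
    pose proof (lattice_tail_step s (x n) (x (S n) - x n) (d n) (d (S n)) Hs
                  (d_pos n) (d_pos (S n)) (d_le_gap n) (d_succ_le_gap n)) as Hstep.
    replace (x n + (x (S n) - x n)) with (x (S n)) in Hstep by ring.
    lra.
Qed.

Lemma laplace_le_lattice s n K : 0 <= s ->
  s * sum1 n (fun k => d k * exp (- (x k * s)))
  <= d 0%nat * sum1 K (fun j => s * exp (- (INR j * d 0%nat * s)))
     + exp (- (INR K * d 0%nat * s)).
Proof.
  pose proof (d_pos 0) as Hd0. set (d0 := d 0%nat) in *.
  intros [Hs|<-].
  2:{ rewrite (sum1_ext K _ (fun _ => 0)) by (intros; ring).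
      rewrite sum1_const. pose proof (exp_pos (- (INR K * d0 * 0))). nra. }
  pose proof (laplace_add_lattice_tail_le s n Hs) as Htail. fold d0 in Htail.
  pose proof (lattice_tail_nonneg s (x n) (d n) Hs (d_pos n)).
  set (u := d0 * s).
  assert (Hu : 0 < u) by (unfold u; nra).
  pose proof (exp_gt_1 u Hu).
  assert (Hlat : s * lattice_tail s 0 d0 = u * (1 / (exp u - 1))).
  { unfold lattice_tail, u. rewrite Rmult_0_l, Ropp_0, exp_0. field. fold u. lra. }
  rewrite (inv_exp_sub_1_expand u K Hu) in Hlat.
  assert (u * (exp (- (INR K * u)) / (exp u - 1)) <= exp (- (INR K * u))).
  { pose proof (exp_ineq1_le u). pose proof (exp_pos (- (INR K * u))).
    assert (u / (exp u - 1) <= 1).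
    { apply Rmult_le_reg_r with (exp u - 1); [lra|].
      replace (u / (exp u - 1) * (exp u - 1)) with u by (field; lra). lra. }
    replace (u * (exp (- (INR K * u)) / (exp u - 1)))
      with (exp (- (INR K * u)) * (u / (exp u - 1))) by (field; lra).
    nra. }
  assert (u * sum1 K (fun j => exp (- (INR j * u)))
          = d0 * sum1 K (fun j => s * exp (- (INR j * d0 * s)))).
  { unfold u. rewrite <- !sum1_scal. apply sum1_ext. intros j _.
    replace (INR j * d0 * s) with (INR j * (d0 * s)) by ring. ring. }
  replace (INR K * d0 * s) with (INR K * u) by (unfold u; ring).
  assert (s * sum1 n (fun k => d k * exp (- (x k * s))) <= s * lattice_tail s 0 d0)
    by (apply Rmult_le_compat_l; lra).
  lra.
Qed.

Lemma int_texp_sum_le n K S : 0 <= S -> (1 <= K)%nat ->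
  sum1 n (fun k => d k * int_texp (x k) S)
  <= d 0%nat * sum1 K (fun j => int_texp (INR j * d 0%nat) S) + int_exp (INR K * d 0%nat) S.
Proof.
  intros HS HK. pose proof (d_pos 0) as Hd0. set (d0 := d 0%nat) in *.
  assert (Hjd : forall j, (1 <= j)%nat -> INR j * d0 <> 0).
  { intros j Hj. assert (1 <= INR j) by (apply (le_INR 1); lia). nra. }
  set (F := fun s => sum1 n (fun k => d k * int_texp (x k) s)
                     - (d0 * sum1 K (fun j => int_texp (INR j * d0) s) + int_exp (INR K * d0) s)).
  set (F' := fun s => sum1 n (fun k => d k * (s * exp (- (x k * s))))
                      - (d0 * sum1 K (fun j => s * exp (- (INR j * d0 * s)))
                         + exp (- (INR K * d0 * s)))).
  assert (HF0 : F 0 = 0).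
  { unfold F. rewrite int_exp_0, (sum1_ext n _ (fun _ => 0)), (sum1_ext K _ (fun _ => 0))
      by (intros; rewrite int_texp_0; ring).
    rewrite !sum1_const. ring. }
  assert (HD : forall s, is_derive F s (F' s)).
  { intros s. unfold F, F'.
    apply (is_derive_minus (fun s => sum1 n (fun k => d k * int_texp (x k) s))
             (fun s => d0 * sum1 K (fun j => int_texp (INR j * d0) s) + int_exp (INR K * d0) s)).
    - apply (is_derive_sum1 n (fun k s => d k * int_texp (x k) s)). intros k Hk.
      apply is_derive_scal, is_derive_int_texp. pose proof (x_pos k (proj1 Hk)). lra.
    - apply (is_derive_plus (fun s => d0 * sum1 K (fun j => int_texp (INR j * d0) s))
               (int_exp (INR K * d0))).
      + apply is_derive_scal, (is_derive_sum1 K (fun j s => int_texp (INR j * d0) s)).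
        intros j Hj. apply is_derive_int_texp, Hjd. lia.
      + apply is_derive_int_exp, Hjd. exact HK. }
  assert (HF'  : forall s, 0 <= s -> F' s <= 0).
  { intros s Hs. unfold F'. pose proof (laplace_le_lattice s n K Hs) as Hlap. fold d0 in Hlap.
    rewrite <- sum1_scal in Hlap.
    rewrite (sum1_ext n _ (fun k => s * (d k * exp (- (x k * s))))) by (intros; ring).
    lra. }
  pose proof (le_of_derive_nonpos F F' S HS HD HF').
  unfold F in *. lra.
Qed.

Lemma one_sided_le n : d 0%nat * sum1 n (fun k => d k / x k ^ 2) <= PI ^ 2 / 6.
Proof.
  pose proof (d_pos 0) as Hd0. set (d0 := d 0%nat) in *.
  set (C := sum1 n (fun k => d k * (4 / x k ^ 3 + 4 / x k ^ 4))).
  apply (le_of_le_add_div_nat _ _ (1 + d0 * C)). intros K HK.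
  assert (HKr : 1 <= INR K) by (apply (le_INR 1); lia).
  assert (Htail : sum1 n (fun k => d k / x k ^ 2)
                  <= sum1 n (fun k => d k * int_texp (x k) (INR K)) + C / INR K).
  { replace (C / INR K) with (/ INR K * C) by (field; lra). unfold C.
    rewrite <- sum1_scal, <- sum1_plus. apply sum1_le. intros k Hk.
    pose proof (x_pos k (proj1 Hk)). pose proof (d_pos k).
    pose proof (inv_sq_sub_int_texp_le (x k) (INR K) ltac:(lra) HKr).
    assert (d k * (1 / x k ^ 2 - int_texp (x k) (INR K))
            <= d k * ((4 / x k ^ 3 + 4 / x k ^ 4) / INR K)) by (apply Rmult_le_compat_l; lra).
    replace (d k / x k ^ 2) with (d k * (1 / x k ^ 2)) by (field; lra).
    replace (/ INR K * (d k * (4 / x k ^ 3 + 4 / x k ^ 4)))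
      with (d k * ((4 / x k ^ 3 + 4 / x k ^ 4) / INR K)) by (field; lra).
    lra. }
  pose proof (int_texp_sum_le n K (INR K) ltac:(lra) HK) as Hint. fold d0 in Hint.
  assert (Hlat : d0 * sum1 K (fun j => int_texp (INR j * d0) (INR K)) <= inv_sq_sum K / d0).
  { replace (inv_sq_sum K / d0) with (d0 * sum1 K (fun j => 1 / (INR j * d0) ^ 2)).
    - apply Rmult_le_compat_l; [lra|]. apply sum1_le. intros j Hj.
      assert (1 <= INR j) by (apply (le_INR 1); lia).
      apply int_texp_le; nra.
    - unfold inv_sq_sum. rewrite <- !sum1_scal.
      replace (sum1 K (fun k => 1 / INR k ^ 2) / d0)
        with (/ d0 * sum1 K (fun k => 1 / INR k ^ 2)) by (field; lra).
      rewrite <- sum1_scal. apply sum1_ext. intros j Hj.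
      assert (1 <= INR j) by (apply (le_INR 1); lia). field. lra. }
  pose proof (int_exp_le (INR K * d0) (INR K) ltac:(nra)).
  pose proof (inv_sq_sum_le K).
  assert (Hsum : sum1 n (fun k => d k / x k ^ 2)
                 <= inv_sq_sum K / d0 + 1 / (INR K * d0) + C / INR K) by lra.
  apply (Rmult_le_compat_l d0) in Hsum; [|lra].
  replace (d0 * (inv_sq_sum K / d0 + 1 / (INR K * d0) + C / INR K))
    with (inv_sq_sum K + (1 + d0 * C) / INR K) in Hsum by (field; lra).
  lra.
Qed.

End Gaps.

Lemma schur_test N (K : nat -> nat -> R) (t : nat -> R) B :
  (forall m n, 0 <= K m n) -> (forall m n, K m n = K n m) ->
  (forall m, (1 <= m <= N)%nat -> sum1 N (K m) <= B) ->
  sum1 N (fun m => sum1 N (fun n => K m n * t m * t n)) <= B * sum1 N (fun n => t n ^ 2).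
Proof.
  intros K_nonneg K_sym row_le.
  set (half := sum1 N (fun m => sum1 N (fun n => K m n * t m ^ 2 / 2))).
  assert (Hamgm : sum1 N (fun m => sum1 N (fun n => K m n * t m * t n))
                  <= sum1 N (fun m => sum1 N (fun n => K m n * t m ^ 2 / 2 + K n m * t n ^ 2 / 2))).
  { apply sum1_le. intros m _. apply sum1_le. intros n _. rewrite (K_sym n m).
    pose proof (K_nonneg m n).
    assert (0 <= K m n * (t m - t n) ^ 2) by (apply Rmult_le_pos; [lra| apply pow2_ge_0]).
    nra. }
  assert (Hsym : sum1 N (fun m => sum1 N (fun n => K m n * t m ^ 2 / 2 + K n m * t n ^ 2 / 2))
                 = 2 * half).
  { rewrite (sum1_ext N _ (fun m => sum1 N (fun n => K m n * t m ^ 2 / 2)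
                                  + sum1 N (fun n => K n m * t n ^ 2 / 2)))
      by (intros; apply sum1_plus).
    rewrite sum1_plus, (sum1_swap N N (fun m n => K n m * t n ^ 2 / 2)). unfold half. ring. }
  assert (Hrow : half <= sum1 N (fun m => t m ^ 2 / 2 * B)).
  { apply sum1_le. intros m Hm.
    rewrite (sum1_ext N _ (fun n => t m ^ 2 / 2 * K m n)) by (intros; unfold Rdiv; ring).
    rewrite sum1_scal. apply Rmult_le_compat_l; [pose proof (pow2_ge_0 (t m)); lra|].
    apply row_le, Hm. }
  rewrite (sum1_ext N (fun m => t m ^ 2 / 2 * B) (fun m => B / 2 * t m ^ 2))
    in Hrow by (intros; unfold Rdiv; ring).
  rewrite sum1_scal in Hrow. lra.
Qed.

Lemma delta_pos lam k : strictly_increasing lam -> 0 < delta lam k.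
Proof.
  intros H. unfold delta. apply Rmin_glb_lt.
  - pose proof (H (k - 1)%Z k ltac:(lia)). lra.
  - pose proof (H k (k + 1)%Z ltac:(lia)). lra.
Qed.

Lemma delta_reflect lam j : delta (fun i => - lam (- i)%Z) j = delta lam (- j)%Z.
Proof.
  unfold delta. rewrite Rmin_comm.
  replace (- (j - 1))%Z with (- j + 1)%Z by lia.
  replace (- (j + 1))%Z with (- j - 1)%Z by lia.
  f_equal; ring.
Qed.

Lemma right_row_le lam M n : strictly_increasing lam ->
  delta lam M * sum1 n (fun k => delta lam (M + Z.of_nat k)%Z
                                 / (lam (M + Z.of_nat k)%Z - lam M) ^ 2)
  <= PI ^ 2 / 6.
Proof.
  intros H.
  set (x := fun k : nat => lam (M + Z.of_nat k)%Z - lam M).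
  set (d := fun k : nat => delta lam (M + Z.of_nat k)%Z).
  assert (x_0 : x 0%nat = 0) by (unfold x; rewrite Z.add_0_r; ring).
  assert (d_pos : forall k, 0 < d k) by (intros; apply delta_pos, H).
  assert (d_le_gap : forall k, d k <= x (S k) - x k).
  { intros k. unfold d, x, delta.
    replace (M + Z.of_nat (S k))%Z with (M + Z.of_nat k + 1)%Z by lia.
    pose proof (Rmin_r (lam (M + Z.of_nat k)%Z - lam (M + Z.of_nat k - 1)%Z)
                       (lam (M + Z.of_nat k + 1)%Z - lam (M + Z.of_nat k)%Z)).
    lra. }
  assert (d_succ_le_gap : forall k, d (S k) <= x (S k) - x k).
  { intros k. unfold d, x, delta.
    replace (M + Z.of_nat (S k) - 1)%Z with (M + Z.of_nat k)%Z by lia.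
    pose proof (Rmin_l (lam (M + Z.of_nat (S k))%Z - lam (M + Z.of_nat k)%Z)
                       (lam (M + Z.of_nat (S k) + 1)%Z - lam (M + Z.of_nat (S k))%Z)).
    lra. }
  replace (delta lam M) with (d 0%nat) by (unfold d; f_equal; lia).
  exact (one_sided_le x d x_0 d_pos d_le_gap d_succ_le_gap n).
Qed.

Lemma left_row_le lam M n : strictly_increasing lam ->
  delta lam M * sum1 n (fun k => delta lam (M - Z.of_nat k)%Z
                                 / (lam M - lam (M - Z.of_nat k)%Z) ^ 2)
  <= PI ^ 2 / 6.
Proof.
  intros H.
  assert (H' : strictly_increasing (fun i => - lam (- i)%Z)).
  { intros j k Hjk. pose proof (H (- k)%Z (- j)%Z ltac:(lia)). lra. }
  pose proof (right_row_le _ (- M)%Z n H') as Hright.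
  rewrite delta_reflect, Z.opp_involutive in Hright.
  erewrite sum1_ext; [exact Hright|]. intros k _. cbv beta.
  rewrite delta_reflect.
  replace (- (- M + Z.of_nat k))%Z with (M - Z.of_nat k)%Z by lia.
  f_equal; ring.
Qed.

Definition kernel (lam : Z -> R) (m n : nat) : R :=
  if Nat.eqb m n then 0
  else delta lam (Z.of_nat m) * delta lam (Z.of_nat n)
       / (lam (Z.of_nat m) - lam (Z.of_nat n)) ^ 2.

Lemma kernel_sym lam m n : kernel lam m n = kernel lam n m.
Proof.
  unfold kernel. rewrite Nat.eqb_sym. destruct (Nat.eqb n m); [reflexivity|].
  f_equal; ring.
Qed.

Lemma kernel_nonneg lam m n : strictly_increasing lam -> 0 <= kernel lam m n.
Proof.
  intros H. unfold kernel. destruct (Nat.eqb_spec m n) as [|Hmn]; [lra|].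
  pose proof (delta_pos lam (Z.of_nat m) H). pose proof (delta_pos lam (Z.of_nat n) H).
  assert (lam (Z.of_nat m) <> lam (Z.of_nat n)).
  { destruct (Nat.lt_gt_cases m n) as [[Hlt|Hgt] _]; [exact Hmn| |].
    - pose proof (H (Z.of_nat m) (Z.of_nat n) ltac:(lia)). lra.
    - pose proof (H (Z.of_nat n) (Z.of_nat m) ltac:(lia)). lra. }
  apply Rmult_le_pos; [nra|]. left. apply Rinv_0_lt_compat.
  rewrite <- Rsqr_pow2. apply Rsqr_pos_lt. lra.
Qed.

Lemma lhs_1_kernel N lam t : strictly_increasing lam ->
  lhs 1 N lam t = sum1 N (fun m => sum1 N (fun n => kernel lam m n * t m * t n)).
Proof.
  intros H. unfold lhs. apply sum1_ext. intros m _. apply sum1_ext. intros n _.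
  unfold kernel. destruct (Nat.eqb m n); [ring|].
  replace (2 - 1) with 1 by ring.
  rewrite !Rpower_1 by (apply delta_pos, H).
  unfold Rdiv. ring.
Qed.

Lemma kernel_row_le lam N m : strictly_increasing lam -> (1 <= m <= N)%nat ->
  sum1 N (kernel lam m) <= PI ^ 2 / 3.
Proof.
  intros H Hm. rewrite (sum1_around N m) by exact Hm.
  replace (kernel lam m m) with 0 by (unfold kernel; rewrite Nat.eqb_refl; reflexivity).
  set (M := Z.of_nat m).
  rewrite (sum1_ext (N - m) _ (fun k => delta lam M * (delta lam (M + Z.of_nat k)%Z
                                          / (lam (M + Z.of_nat k)%Z - lam M) ^ 2))).
  2:{ intros k Hk. unfold kernel. destruct (Nat.eqb_spec m (m + k)); [lia|].
      rewrite Nat2Z.inj_add. fold M.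
      replace ((lam M - lam (M + Z.of_nat k)%Z) ^ 2) with ((lam (M + Z.of_nat k)%Z - lam M) ^ 2)
        by ring.
      unfold Rdiv. ring. }
  rewrite (sum1_ext (m - 1) _ (fun k => delta lam M * (delta lam (M - Z.of_nat k)%Z
                                          / (lam M - lam (M - Z.of_nat k)%Z) ^ 2))).
  2:{ intros k Hk. unfold kernel. destruct (Nat.eqb_spec m (m - k)); [lia|].
      rewrite Nat2Z.inj_sub by lia. fold M. unfold Rdiv. ring. }
  rewrite !sum1_scal.
  pose proof (right_row_le lam M (N - m) H). pose proof (left_row_le lam M (m - 1) H).
  lra.
Qed.

Lemma admissible_1_pi_sq_div_3 : admissible 1 (PI ^ 2 / 3).
Proof.
  intros N _ lam H t _. rewrite lhs_1_kernel by exact H.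
  apply schur_test.
  - intros. apply kernel_nonneg, H.
  - apply kernel_sym.
  - intros m Hm. apply kernel_row_le; assumption.
Qed.

Lemma IZR_strictly_increasing : strictly_increasing IZR.
Proof. intros j k H. apply IZR_lt, H. Qed.

Lemma delta_IZR z : delta IZR z = 1.
Proof.
  unfold delta. rewrite minus_IZR, plus_IZR.
  replace (IZR z - (IZR z - 1)) with 1 by ring.
  replace (IZR z + 1 - IZR z) with 1 by ring.
  apply Rmin_left. lra.
Qed.

Lemma kernel_IZR m n : m <> n -> kernel IZR m n = 1 / (INR m - INR n) ^ 2.
Proof.
  intros Hmn. unfold kernel. destruct (Nat.eqb_spec m n); [contradiction|].
  rewrite !delta_IZR, <- !INR_IZR_INZ. unfold Rdiv. ring.
Qed.

Lemma lattice_row_ge N K m : (K + 1 <= m <= N - K)%nat ->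
  2 * inv_sq_sum K <= sum1 N (kernel IZR m).
Proof.
  intros Hm. rewrite (sum1_around N m) by lia.
  replace (kernel IZR m m) with 0 by (unfold kernel; rewrite Nat.eqb_refl; reflexivity).
  assert (Hnn : forall n, 0 <= kernel IZR m n)
    by (intros; apply kernel_nonneg, IZR_strictly_increasing).
  assert (Hleft : inv_sq_sum K <= sum1 (m - 1) (fun k => kernel IZR m (m - k))).
  { apply Rle_trans with (sum1 K (fun k => kernel IZR m (m - k))).
    - right. apply sum1_ext. intros k Hk. rewrite kernel_IZR, minus_INR by lia.
      f_equal. ring.
    - apply sum1_le_upper; [lia| intros; apply Hnn]. }
  assert (Hright : inv_sq_sum K <= sum1 (N - m) (fun k => kernel IZR m (m + k))).
  { apply Rle_trans with (sum1 K (fun k => kernel IZR m (m + k))).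
    - right. apply sum1_ext. intros k Hk. rewrite kernel_IZR, plus_INR by lia.
      f_equal. ring.
    - apply sum1_le_upper; [lia| intros; apply Hnn]. }
  lra.
Qed.

Lemma lhs_lattice_ge N K : (2 * K <= N)%nat ->
  (INR N - 2 * INR K) * (2 * inv_sq_sum K) <= lhs 1 N IZR (fun _ => 1).
Proof.
  intros HNK. rewrite lhs_1_kernel by exact IZR_strictly_increasing.
  rewrite (sum1_ext N _ (fun m => sum1 N (kernel IZR m)))
    by (intros; apply sum1_ext; intros; ring).
  assert (Hrow_nn : forall m, 0 <= sum1 N (kernel IZR m)).
  { intros m. apply sum1_nonneg. intros. apply kernel_nonneg, IZR_strictly_increasing. }
  apply Rle_trans with (sum1 (K + (N - 2 * K)) (fun m => sum1 N (kernel IZR m))).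
  - rewrite sum1_add.
    assert (0 <= sum1 K (fun m => sum1 N (kernel IZR m))) by (apply sum1_nonneg; auto).
    assert (sum1 (N - 2 * K) (fun _ => 2 * inv_sq_sum K)
            <= sum1 (N - 2 * K) (fun k => sum1 N (kernel IZR (K + k))))
      by (apply sum1_le; intros; apply lattice_row_ge; lia).
    rewrite sum1_const, minus_INR, mult_INR in * by lia. simpl (INR 2) in *.
    lra.
  - apply sum1_le_upper; [lia| auto].
Qed.

Lemma pi_sq_div_3_le_admissible C : admissible 1 C -> PI ^ 2 / 3 <= C.
Proof.
  intros HC. apply (le_of_le_add_div_nat _ _ 36). intros n Hn.
  pose proof (pow2_gt_id n) as Hpow.
  set (K := (2 ^ n - 1)%nat). set (N := (2 * n * 2 ^ n)%nat).
  pose proof (lhs_lattice_ge N K ltac:(unfold N, K; nia)) as Hlat.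
  pose proof (HC N ltac:(unfold N; nia) IZR IZR_strictly_increasing (fun _ => 1)
                (fun _ _ => Rle_0_1)) as Hadm.
  rewrite (sum1_ext N _ (fun _ => 1)), sum1_const in Hadm by (intros; ring).
  pose proof (inv_sq_sum_pow2_ge n) as Hzlow. pose proof (inv_sq_sum_le K) as Hzup.
  fold K in Hzlow.
  assert (0 <= inv_sq_sum K).
  { apply sum1_nonneg. intros k Hk. assert (1 <= INR k) by (apply (le_INR 1); lia).
    apply Rlt_le, Rdiv_lt_0_compat; [lra| apply pow_lt; lra]. }
  pose proof PI_4. pose proof PI_RGT_0.
  assert (PI ^ 2 <= 16) by nra.
  assert (Hr : 1 <= INR n) by (apply (le_INR 1); lia).
  assert (HrM : INR n <= 2 ^ n).
  { replace (2 ^ n) with (INR (2 ^ n)) by (rewrite pow_INR; f_equal).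
    apply le_INR. lia. }
  assert (HK : INR K = 2 ^ n - 1).
  { unfold K. rewrite minus_INR, pow_INR by lia. reflexivity. }
  assert (HN : INR N = 2 * INR n * 2 ^ n).
  { unfold N. rewrite !mult_INR, pow_INR. reflexivity. }
  rewrite HK, HN in *.
  set (r := INR n) in *. set (M := 2 ^ n) in *. set (z := inv_sq_sum K) in *.
  assert (HzM : z * M >= PI ^ 2 / 6 * M - 15).
  { replace (PI ^ 2 / 6 * M - 15) with ((PI ^ 2 / 6 - 15 / M) * M) by (field; lra).
    apply Rle_ge, Rmult_le_compat_r; lra. }
  assert (Hlow : (PI ^ 2 / 3 - 36 / r) * (2 * r * M) <= C * (2 * r * M)).
  { replace ((PI ^ 2 / 3 - 36 / r) * (2 * r * M)) with (PI ^ 2 / 3 * (2 * r * M) - 72 * M)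
      by (field; lra).
    assert (Hexp : (2 * r * M - 2 * (M - 1)) * (2 * z) = 4 * r * (z * M) - 4 * (z * M) + 4 * z)
      by ring.
    assert (r * (PI ^ 2 / 6 * M - 15) <= r * (z * M)) by (apply Rmult_le_compat_l; lra).
    assert (z * M <= 3 * M) by (apply Rmult_le_compat_r; lra).
    nra. }
  apply Rmult_le_reg_r in Hlow; [|nra].
  lra.
Qed.

Theorem theorem4 :
  admissible 1 (PI ^ 2 / 3) /\ (forall C : R, admissible 1 C -> PI ^ 2 / 3 <= C).
Proof. split; [exact admissible_1_pi_sq_div_3| exact pi_sq_div_3_le_admissible]. Qed.
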